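(* Let $V:\mathbb{Z}^d\to\mathbb{R}^+\cup\{+\infty\}$ be a strictly convex potential with $V(\vec0)=0$. If $\rho(V,\alpha)<\rho_0$, then $\beta(V,\alpha)<1$. In particular, $$\alpha^*(V)\le\inf\{\alpha>0:\rho(V,\alpha)\le\rho_0\}.$$
   Context: $\rho(V,\alpha)=\sum_{x\in\mathbb{Z}^d\setminus\{\vec0\}}e^{-\alpha V(x)}$; $\rho_0\approx0.44504$ is the unique solution $r\in[0,1]$ of $\frac{r}{(1-r)^2}-r=1$. $\Gamma$ is the set of finite cycles of $\mathbb{Z}^d$ (a cycle of length $|\gamma|=n\ge2$ on distinct sites $x_1,\dots,x_n$ maps $x_i\mapsto x_{i+1}$ mod $n$ and fixes other sites; support $\{\gamma\}$); $w(\gamma)=\exp\{-\alpha\sum_{x\in\{\gamma\}}V(\gamma(x)-x)\}$; $\beta(V,\alpha)=\sum_{\gamma\in\Gamma,\vec0\in\{\gamma\}}|\gamma|w(\gamma)$; $\alpha^*(V)=\inf\{\alpha:\beta(V,\alpha)<1\}$ (and $\alpha^*=\infty$ if $\beta(V,\alpha)=\infty$ for all $\alpha$). *)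

From HB Require Import structures.
From mathcomp Require Import all_boot all_order all_algebra.
From mathcomp Require Import all_classical all_reals all_analysis.
From mathcomp Require Import finmap.
Set Implicit Arguments. Unset Strict Implicit. Unset Printing Implicit Defensive.
Import Order.TTheory GRing.Theory Num.Theory.
Local Open Scope classical_set_scope.
Local Open Scope ring_scope.

Definition Zd (d : nat) := 'rV[int]_d.

Definition embed (R : realType) (d : nat) (x : Zd d) : 'rV[R]_d :=
  map_mx (fun z : int => z%:~R) x.

(** Strict convexity of an extended-valued function f : R^d -> R ∪ {+oo}
    (convexity of the epigraph, strict on the effective domain). *)
Definition strictly_convex_fun (R : realType) (d : nat) (f : 'rV[R]_d -> \bar R) :=
  forall (x y : 'rV[R]_d) (t : R), x != y -> 0 < t -> t < 1 ->
    (f x < +oo)%E -> (f y < +oo)%E ->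
    (f (t *: x + (1 - t) *: y)%R < t%:E * f x + (1 - t)%:E * f y)%E.

Definition strictly_convex_pot (R : realType) (d : nat) (V : Zd d -> \bar R) :=
  exists f : 'rV[R]_d -> \bar R,
    strictly_convex_fun f /\ forall x : Zd d, V x = f (embed R x).

Definition rho (R : realType) (d : nat) (V : Zd d -> \bar R) (alpha : R) : \bar R :=
  (\esum_(x in [set x : Zd d | x != 0%R]) expeR (- (alpha%:E * V x)))%E.

Definition rho0 (R : realType) : R :=
  xget 0 [set r : R | 0 <= r <= 1 /\ r / (1 - r) ^+ 2 - r = 1].

(** The cyclic permutation x_1 -> x_2 -> ... -> x_n -> x_1 given by a
    sequence s = [:: x_1; ...; x_n], fixing all other sites. *)
Definition cyc_of (d : nat) (s : seq (Zd d)) (x : Zd d) : Zd d :=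
  if x \in s then nth x s ((index x s).+1 %% size s) else x.

Definition Gamma (d : nat) : set (Zd d -> Zd d) :=
  [set g | exists s : seq (Zd d), [/\ uniq s, (2 <= size s)%N & g = cyc_of s]].

Definition supp (d : nat) (g : Zd d -> Zd d) : set (Zd d) := [set x | g x != x].

Definition cyc_len (d : nat) (g : Zd d -> Zd d) : nat := #|` fset_set (supp g)|%fset.

Definition cyc_weight (R : realType) (d : nat) (V : Zd d -> \bar R) (alpha : R)
    (g : Zd d -> Zd d) : \bar R :=
  expeR (- (alpha%:E * \sum_(x <- fset_set (supp g)) V (g x - x)%R))%E.

Definition beta (R : realType) (d : nat) (V : Zd d -> \bar R) (alpha : R) : \bar R :=
  (\esum_(g in [set g | Gamma g /\ supp g 0%R]) (cyc_len g)%:R%:E * cyc_weight V alpha g)%E.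

(** alpha^*(V) = inf {alpha : beta(V, alpha) < 1}  (= +oo if the set is empty). *)
Definition alpha_star (R : realType) (d : nat) (V : Zd d -> \bar R) : \bar R :=
  ereal_inf [set a%:E | a in [set a : R | (beta V a < 1)%E]].

From HB Require Import structures.
From mathcomp Require Import all_boot all_order all_algebra.
From mathcomp Require Import all_classical all_reals all_analysis.
From mathcomp Require Import finmap.
From mathcomp Require Import ring lra.
Set Implicit Arguments. Unset Strict Implicit. Unset Printing Implicit Defensive.
Import Order.TTheory GRing.Theory Num.Theory.
Local Open Scope classical_set_scope.
Local Open Scope ring_scope.

(* Write rho for rho(V, alpha). Listed from 0, a cycle through 0 of length n is
   determined by its n jumps x_(i+1) - x_i, which are nonzero sites, and its weight
   is the product of the factors exp(-alpha V(jump)). So the cycles through 0 of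
   length n weigh at most rho^n in total, and beta <= sum_(n >= 2) n rho^n =
   rho/(1-rho)^2 - rho, which increases on [0, 1) and equals 1 at rho_0.
   For the bound on alpha^*: if rho(alpha) = rho_0 > 0, some site y <> 0 has
   0 < V(y) < +oo, so rho(alpha + e) < rho_0 and beta(alpha + e) < 1 for all e > 0. *)

Lemma partition_big_seq (R : Type) (idx : R) (op : Monoid.com_law idx)
    (I J : eqType) (r : seq I) (s : seq J) (p : I -> J) (F : I -> R) :
  uniq s -> {in r, forall i, p i \in s} ->
  \big[op/idx]_(i <- r) F i = \big[op/idx]_(j <- s) \big[op/idx]_(i <- r | p i == j) F i.
Proof.
move=> us rs; under [RHS]eq_bigr do rewrite big_mkcond.
rewrite exchange_big; apply: eq_big_seq => i ri.
rewrite -big_mkcond -big_filter (eq_filter (a2 := pred1 (p i))); last first.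
  by move=> j; rewrite /= eq_sym.
by rewrite filter_pred1_uniq ?rs // big_seq1.
Qed.

Section Cycles.
Variable d : nat.
Implicit Types (s : seq (Zd d)) (x : Zd d).

Lemma cyc_of_next s : cyc_of s =1 next s.
Proof.
move=> x; rewrite next_nth /cyc_of; case: ifP => // xs.
case: s xs => [//|y s] xs.
have : (index x (y :: s) <= size s)%N by rewrite -ltnS index_mem.
rewrite [size _]/= leq_eqVlt => /orP[/eqP ->|lt_xs].
  by rewrite modnn /= nth_default.
by rewrite modn_small //= (set_nth_default y).
Qed.

Lemma cyc_of_rot k s : uniq s -> cyc_of (rot k s) = cyc_of s.
Proof. by move=> us; apply: funext => x; rewrite !cyc_of_next next_rot. Qed.

Lemma cyc_of_nth s i : uniq s -> (i < size s)%N ->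
  cyc_of s (nth 0 s i) = nth 0 s (i.+1 %% size s).
Proof.
move=> us lti; rewrite /cyc_of mem_nth // index_uniq //.
by apply: set_nth_default; rewrite ltn_pmod // (leq_ltn_trans _ lti).
Qed.

Lemma cyc_of_moved s x : uniq s -> (1 < size s)%N -> x \in s -> cyc_of s x != x.
Proof.
move=> us s2 xs; rewrite -{1 2}(nth_index 0 xs).
have lti : (index x s < size s)%N by rewrite index_mem.
rewrite cyc_of_nth // nth_uniq //; last by rewrite ltn_pmod // ltnW.
move: (lti); rewrite leq_eqVlt => /orP[/eqP e|lt_is].
  by rewrite -e modnn eq_sym; apply: contraTneq s2 => i0; rewrite -e i0.
by rewrite modn_small // (gtn_eqF (ltnSn _)).
Qed.

Lemma supp_cyc_of s : uniq s -> (1 < size s)%N -> supp (cyc_of s) = [set x | x \in s].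
Proof.
move=> us s2; apply/seteqP; split => x /=; last exact: cyc_of_moved.
by apply: contraNT => xs; rewrite /cyc_of (negbTE xs).
Qed.

Lemma perm_fset_supp_cyc_of s : uniq s -> (1 < size s)%N ->
  perm_eq (fset_set (supp (cyc_of s))) s.
Proof.
move=> us s2; rewrite supp_cyc_of //; apply: uniq_perm (fset_uniq _) us _ => x.
by rewrite in_fset_set ?mem_setE //; exact: finite_seq.
Qed.

Lemma cyc_len_cyc_of s : uniq s -> (1 < size s)%N -> cyc_len (cyc_of s) = size s.
Proof. by move=> us s2; rewrite /cyc_len (perm_size (perm_fset_supp_cyc_of us s2)). Qed.

Definition cyc_jump s i := nth 0 s (i.+1 %% size s) - nth 0 s i.

Lemma cyc_jump_neq0 s i : uniq s -> (1 < size s)%N -> (i < size s)%N -> cyc_jump s i != 0.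
Proof.
move=> us s2 lti; rewrite /cyc_jump subr_eq0 -cyc_of_nth //.
by rewrite cyc_of_moved // mem_nth.
Qed.

Lemma big_supp_cyc_of (T : Type) (idx : T) (op : Monoid.com_law idx) (F : Zd d -> T) s :
  uniq s -> (1 < size s)%N ->
  \big[op/idx]_(x <- fset_set (supp (cyc_of s))) F (cyc_of s x - x) =
  \big[op/idx]_(0 <= i < size s) F (cyc_jump s i).
Proof.
move=> us s2; rewrite (perm_big _ (perm_fset_supp_cyc_of us s2)) (big_nth 0).
by apply: eq_big_nat => i /andP[_ lti]; rewrite cyc_of_nth.
Qed.

Lemma eq_from_cyc_jump s1 s2 : size s1 = size s2 ->
  nth 0 s1 0 = 0 -> nth 0 s2 0 = 0 ->
  {in gtn (size s1), cyc_jump s1 =1 cyc_jump s2} -> s1 = s2.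
Proof.
move=> eq_sz z1 z2 eq_jump; apply: (eq_from_nth (x0 := 0)) => // i.
elim: i => [|i IH] lti; first by rewrite z1 z2.
have nthS s : (i.+1 < size s)%N -> nth 0 s i.+1 = cyc_jump s i + nth 0 s i.
  by move=> lt_is; rewrite /cyc_jump modn_small // subrK.
by rewrite !nthS -?eq_sz // eq_jump ?IH ?inE // ltnW.
Qed.

Definition rooted_cycle s := [/\ uniq s, (1 < size s)%N & nth 0 s 0 = 0].

Lemma rooted_cycle_ex g : Gamma g -> supp g 0 -> exists s, rooted_cycle s /\ g = cyc_of s.
Proof.
move=> [s [us s2 ->]] g0.
have s0 : 0 \in s by apply: contraT => s0; move: g0; rewrite /supp /cyc_of /= (negbTE s0) eqxx.
exists (rot (index 0 s) s); rewrite cyc_of_rot //.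
by split => //; split; rewrite ?rot_uniq ?size_rot ?rot_index.
Qed.

Definition root_seq g := xget [::] [set s | rooted_cycle s /\ g = cyc_of s].

Lemma root_seqP g : Gamma g -> supp g 0 -> rooted_cycle (root_seq g) /\ g = cyc_of (root_seq g).
Proof. by move=> Gg g0; exact: (xgetPex [::] (rooted_cycle_ex Gg g0)). Qed.

End Cycles.

Lemma sum_prod_le_expn (T : eqType) (R : numDomainType) (h : T -> R)
    (tl : seq T) (ts : seq (seq T)) n :
  (forall x, 0 <= h x) -> uniq tl -> uniq ts ->
  {in ts, forall t, size t = n /\ {subset t <= tl}} ->
  \sum_(t <- ts) \prod_(x <- t) h x <= (\sum_(y <- tl) h y) ^+ n.
Proof.
move=> h_ge0 utl; elim: n ts => [|n IH] ts uts tsP.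
  case: ts uts tsP => [|t [|t' ts]] uts tsP.
  - by rewrite big_nil expr0.
  - have [/size0nil -> _] := tsP t (mem_head _ _).
    by rewrite big_seq1 big_nil.
  - have [/size0nil t0 _] := tsP t (mem_head _ _).
    have [/size0nil t'0 _] := tsP t' (mem_behead (s := t :: _) (mem_head t' ts)).
    by move: uts; rewrite /= inE t0 t'0 eqxx.
pose tails y := [seq behead t | t <- ts & ohead t == Some y].
have tailsE y : \sum_(t <- ts | ohead t == Some y) \prod_(x <- t) h x =
    h y * \sum_(u <- tails y) \prod_(x <- u) h x.
  rewrite big_map big_filter mulr_sumr.
  by apply: eq_bigr => -[|x u] //= /eqP[->]; rewrite big_cons.
have heads_tl : {in ts, forall t, ohead t \in map Some tl}.
  by move=> t /tsP[]; case: t => [//|x t] _ sub_t; apply: map_f; rewrite sub_t ?mem_head.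
have uheads : uniq (map Some tl) by rewrite map_inj_uniq //; exact: Some_inj.
rewrite (partition_big_seq _ _ uheads heads_tl) big_map exprS mulr_suml.
apply: ler_sum => y _; rewrite tailsE; apply: ler_wpM2l => //; apply: IH.
  rewrite map_inj_in_uniq ?filter_uniq // => t1 t2.
  rewrite !mem_filter => /andP[+ _] /andP[+ _].
  by case: t1 => [|? ?]; case: t2 => [|? ?] //= /eqP[->] /eqP[->] ->.
move=> u /mapP[t]; rewrite mem_filter => /andP[_ /tsP[]].
case: t => [//|x t] /= [szt] sub_t ->.
by split=> // z zt; apply: sub_t; rewrite inE zt orbT.
Qed.

Lemma sum_nat_mul_expr (R : comPzRingType) (r : R) N :
  (1 - r) ^+ 2 * \sum_(0 <= n < N) n%:R * r ^+ n =
  r - N%:R * r ^+ N + (N%:R - 1) * r ^+ N.+1.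
Proof.
elim: N => [|N IH]; first by rewrite big_geq // mulr0 !mul0r subr0 sub0r mulN1r subrr.
by rewrite big_nat_recr //= mulrDr IH !exprS -natr1; ring.
Qed.

(* [r / (1 - r)^2 - r] is [\sum_(n >= 2) n r^n]. *)
Definition cycle_series (R : numFieldType) (r : R) := r / (1 - r) ^+ 2 - r.

Lemma cycle_series_ge0 (R : realFieldType) (r : R) : 0 <= r -> r < 1 -> 0 <= cycle_series r.
Proof.
move=> r0 r1; rewrite subr_ge0 ler_pdivlMr ?exprn_gt0 ?subr_gt0 //.
by apply: ler_piMr => //; rewrite expr_le1 ?subr_ge0 //; lra.
Qed.

Lemma sum_nat_mul_expr_le (R : realFieldType) (r : R) N : 0 <= r -> r < 1 ->
  \sum_(2 <= n < N) n%:R * r ^+ n <= cycle_series r.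
Proof.
move=> r0 r1; case: N => [|[|M]]; try by rewrite big_geq // cycle_series_ge0.
have partial_le : \sum_(0 <= n < M.+2) n%:R * r ^+ n <= r / (1 - r) ^+ 2.
  rewrite ler_pdivlMr ?exprn_gt0 ?subr_gt0 // mulrC sum_nat_mul_expr.
  have : (M.+2%:R - 1) * r ^+ M.+3 <= M.+2%:R * r ^+ M.+2.
    rewrite exprS mulrA; apply: ler_wpM2r; first exact: exprn_ge0.
    have : (1 : R) <= M.+2%:R by rewrite ler1n.
    nra.
  lra.
move: partial_le; rewrite big_ltn // big_ltn //= /cycle_series.
lra.
Qed.

Lemma expeR_Nmul_sum (R : realType) (I : Type) (r : seq I) (a : \bar R) (F : I -> \bar R) :
  (0 <= a)%E -> (forall i, 0 <= F i)%E ->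
  expeR (- (a * \sum_(i <- r) F i))%E = (\prod_(i <- r) expeR (- (a * F i)))%E.
Proof.
move=> a0 F0; elim: r => [|i r IH]; first by rewrite !big_nil mule0 oppe0 expeR0.
rewrite !big_cons ge0_muleDr ?sume_ge0 // oppeD ?expeRD ?IH //.
by apply: ge0_adde_def; rewrite inE /= mule_ge0 ?sume_ge0.
Qed.

Lemma esum_le_seq (R : realType) (T : choiceType) (A : set T) (f : T -> \bar R) (M : \bar R) :
  (forall l : seq T, uniq l -> {subset l <= A} -> (\sum_(x <- l) f x <= M)%E) ->
  (\esum_(x in A) f x <= M)%E.
Proof.
move=> sum_le; apply: ge_ereal_sup => _ [X [finX XA] <-].
rewrite fsbig_finite //; apply: sum_le; first exact: fset_uniq.
by move=> x; rewrite in_fset_set // => /set_mem /XA /mem_set.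
Qed.

Lemma sum_seq_le_esum (R : realType) (T : choiceType) (A : set T) (f : T -> \bar R) (l : seq T) :
  uniq l -> {subset l <= A} -> (\sum_(x <- l) f x <= \esum_(x in A) f x)%E.
Proof.
move=> ul lA; apply: esum_ge; exists [set` l]; last by rewrite fsbig_seq.
by split; [exact: finite_seq | move=> x /lA /set_mem].
Qed.

Section Boltzmann.
Variables (R : realType) (d : nat) (V : Zd d -> \bar R).
Hypothesis V_ge0 : forall x, (0 <= V x)%E.

Definition boltzmann (alpha : R) (y : Zd d) : R := fine (expeR (- (alpha%:E * V y)))%E.

Lemma boltzmannE alpha y : 0 < alpha ->
  expeR (- (alpha%:E * V y))%E = (boltzmann alpha y)%:E.
Proof.
rewrite /boltzmann; have := V_ge0 y; case: (V y) => [v||] // _ alpha_gt0.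
by rewrite mulry gtr0_sg // mul1e.
Qed.

Lemma boltzmann_ge0 alpha y : 0 <= boltzmann alpha y.
Proof. exact/fine_ge0/expeR_ge0. Qed.

Lemma boltzmann_fin alpha y v : V y = v%:E -> boltzmann alpha y = expR (- (alpha * v)).
Proof. by move=> Vy; rewrite /boltzmann Vy -EFinM. Qed.

Lemma boltzmann_infty alpha y : 0 < alpha -> V y = +oo%E -> boltzmann alpha y = 0.
Proof. by move=> alpha_gt0 Vy; rewrite /boltzmann Vy mulry gtr0_sg // mul1e. Qed.

Lemma boltzmann_le alpha beta y : 0 < alpha -> alpha <= beta ->
  boltzmann beta y <= boltzmann alpha y.
Proof.
move=> alpha_gt0 le_ab; have beta_gt0 := lt_le_trans alpha_gt0 le_ab.
have := V_ge0 y; case Vy: (V y) => [v||] // v0.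
  by rewrite !(boltzmann_fin _ Vy) ler_expR lerN2 ler_wpM2r.
by rewrite !boltzmann_infty.
Qed.

Lemma boltzmann_lt alpha beta y v : 0 < alpha < beta -> V y = v%:E -> 0 < v ->
  boltzmann beta y < boltzmann alpha y.
Proof.
move=> /andP[a0 lt_ab] Vy v0.
by rewrite !(boltzmann_fin _ Vy) ltr_expR ltrN2 ltr_pM2r.
Qed.

Lemma cyc_weight_cyc_of alpha s : 0 < alpha -> uniq s -> (1 < size s)%N ->
  cyc_weight V alpha (cyc_of s) = (\prod_(0 <= i < size s) boltzmann alpha (cyc_jump s i))%:E.
Proof.
move=> alpha_gt0 us s2; rewrite /cyc_weight big_supp_cyc_of // expeR_Nmul_sum ?lee_fin ?ltW // -prodEFin.
by apply: eq_bigr => i _; exact: boltzmannE.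
Qed.

Lemma sum_boltzmann_le_rho alpha l : 0 < alpha -> uniq l -> {subset l <= predC1 0} ->
  ((\sum_(y <- l) boltzmann alpha y)%:E <= rho V alpha)%E.
Proof.
move=> alpha_gt0 ul l0; rewrite -sumEFin.
under eq_bigr do rewrite -boltzmannE //.
by apply: sum_seq_le_esum => // y /l0 /= y0; apply/mem_set.
Qed.
End Boltzmann.

Definition cycles0 (d : nat) : set (Zd d -> Zd d) := [set g | Gamma g /\ supp g 0].

Section BetaBound.
Variables (R : realType) (d : nat) (V : Zd d -> \bar R) (alpha : R).
Hypotheses (V_ge0 : forall x, (0 <= V x)%E) (alpha_gt0 : 0 < alpha).
Implicit Types (g : Zd d -> Zd d) (L : seq (Zd d -> Zd d)).

Definition root_weight g :=
  \prod_(0 <= i < size (root_seq g)) boltzmann V alpha (cyc_jump (root_seq g) i).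

Lemma cyc_weight_root g : cycles0 g -> cyc_weight V alpha g = (root_weight g)%:E.
Proof.
move=> [Gg g0]; have [[us s2 _] eg] := root_seqP Gg g0.
by rewrite [in LHS]eg cyc_weight_cyc_of.
Qed.

Lemma cyc_len_root g : cycles0 g -> cyc_len g = size (root_seq g).
Proof.
move=> [Gg g0]; have [[us s2 _] eg] := root_seqP Gg g0.
by rewrite [in LHS]eg cyc_len_cyc_of.
Qed.

Lemma sum_root_weight_size_eq L (tl : seq (Zd d)) n :
  uniq L -> {subset L <= @cycles0 d} -> uniq tl ->
  (forall g i, g \in L -> (i < size (root_seq g))%N -> cyc_jump (root_seq g) i \in tl) ->
  \sum_(g <- L | size (root_seq g) == n) root_weight g <=
    (\sum_(y <- tl) boltzmann V alpha y) ^+ n.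
Proof.
move=> uL L0 utl jump_tl.
pose jumps g := [seq cyc_jump (root_seq g) i | i <- iota 0 n].
have rootP g : g \in L -> rooted_cycle (root_seq g) /\ g = cyc_of (root_seq g).
  by move=> /L0 /set_mem[Gg g0]; exact: root_seqP.
rewrite -big_filter; set L_n := [seq g <- L | _].
have -> : \sum_(g <- L_n) root_weight g =
    \sum_(t <- map jumps L_n) \prod_(x <- t) boltzmann V alpha x.
  rewrite big_map; apply: eq_big_seq => g; rewrite mem_filter => /andP[/eqP sz _].
  by rewrite /root_weight sz big_map /index_iota subn0.
apply: sum_prod_le_expn; [exact: boltzmann_ge0 | exact: utl | |].
  rewrite map_inj_in_uniq ?filter_uniq // => g1 g2.
  rewrite !mem_filter => /andP[/eqP sz1 g1L] /andP[/eqP sz2 g2L] eq_jumps.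
  have [[_ _ z1] ->] := rootP _ g1L; have [[_ _ z2] ->] := rootP _ g2L.
  congr cyc_of; apply: eq_from_cyc_jump; rewrite ?sz1 ?sz2 // => i; rewrite inE => lti.
  have := congr1 (nth 0 ^~ i) eq_jumps.
  by rewrite /jumps !(nth_map 0) ?size_iota // nth_iota.
move=> t /mapP[g]; rewrite mem_filter => /andP[/eqP sz gL] ->.
split; first by rewrite size_map size_iota.
by move=> x /mapP[i]; rewrite mem_iota add0n => /andP[_ lti] ->; apply: jump_tl; rewrite ?sz.
Qed.

Lemma sum_len_root_weight_le L r : (rho V alpha <= r%:E)%E -> r < 1 ->
  uniq L -> {subset L <= @cycles0 d} ->
  \sum_(g <- L) (size (root_seq g))%:R * root_weight g <= cycle_series r.
Proof.
move=> rho_le r_lt1 uL L0.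
have rootP g : g \in L -> rooted_cycle (root_seq g).
  by move=> /L0 /set_mem[Gg g0]; have [] := root_seqP Gg g0.
set N := (\max_(g <- L) size (root_seq g)).+1.
set tl := undup (flatten [seq [seq cyc_jump (root_seq g) i | i <- iota 0 (size (root_seq g))]
                           | g <- L]).
have jump_tl g i : g \in L -> (i < size (root_seq g))%N -> cyc_jump (root_seq g) i \in tl.
  move=> gL lti; rewrite mem_undup; apply/flatten_mapP; exists g => //.
  by apply: map_f; rewrite mem_iota.
have tl_le_r : \sum_(y <- tl) boltzmann V alpha y <= r.
  rewrite -lee_fin; apply: le_trans rho_le; apply: sum_boltzmann_le_rho => //.
    exact: undup_uniq.
  move=> y; rewrite mem_undup => /flatten_mapP[g gL /mapP[i]].
  rewrite mem_iota => /andP[_ lti] ->; have [us s2 _] := rootP g gL.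
  exact: cyc_jump_neq0.
have tl_ge0 : 0 <= \sum_(y <- tl) boltzmann V alpha y.
  by apply: sumr_ge0 => y _; exact: boltzmann_ge0.
have size_range : {in L, forall g, size (root_seq g) \in index_iota 2 N}.
  move=> g gL; have [_ s2 _] := rootP g gL.
  by rewrite mem_index_iota s2 ltnS; exact: leq_bigmax_seq.
rewrite (partition_big_seq _ _ (iota_uniq _ _) size_range).
apply: le_trans (sum_nat_mul_expr_le N (le_trans tl_ge0 tl_le_r) r_lt1).
apply: ler_sum => n _; rewrite (eq_bigr (fun g => n%:R * root_weight g)); last first.
  by move=> g /eqP ->.
rewrite -mulr_sumr ler_wpM2l //; apply: le_trans (sum_root_weight_size_eq n uL L0 (undup_uniq _) jump_tl) _.
by rewrite lerXn2r // nnegrE (le_trans tl_ge0 tl_le_r).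
Qed.

Lemma beta_le_cycle_series r : (rho V alpha <= r%:E)%E -> r < 1 ->
  (beta V alpha <= (cycle_series r)%:E)%E.
Proof.
move=> rho_le r_lt1; apply: esum_le_seq => L uL L0.
rewrite (eq_big_seq (fun g => ((size (root_seq g))%:R * root_weight g)%:E)); last first.
  by move=> g /L0 /set_mem g0; rewrite cyc_weight_root // cyc_len_root.
by rewrite sumEFin lee_fin sum_len_root_weight_le.
Qed.

End BetaBound.

Lemma cycle_series_lt (R : realFieldType) (a b : R) : 0 <= a -> a < b -> b < 1 ->
  cycle_series a < cycle_series b.
Proof.
move=> a0 ab b1; have b0 : 0 < b by apply: le_lt_trans ab.
have pa : 0 < (1 - a) ^+ 2 by rewrite exprn_gt0 // subr_gt0 (lt_trans ab).
have pb : 0 < (1 - b) ^+ 2 by rewrite exprn_gt0 // subr_gt0.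
have le_sq : (1 - b) ^+ 2 <= (1 - a) ^+ 2.
  by rewrite lerXn2r ?nnegrE ?subr_ge0 ?lerD2l ?lerN2 ?ltW // (lt_trans ab).
have h1 : a / (1 - a) ^+ 2 <= a / (1 - b) ^+ 2.
  by apply: ler_wpM2l => //; rewrite lef_pV2 ?posrE.
have h2 : b - a < (b - a) / (1 - b) ^+ 2.
  rewrite ltr_pdivlMr //; have : (1 - b) ^+ 2 < 1.
    by rewrite expr2; nra.
  have : 0 < b - a by rewrite subr_gt0.
  nra.
rewrite /cycle_series; move: h2; rewrite mulrBl; lra.
Qed.

(* Without a root in [0, 1], [xget] would return its default 0. *)
Lemma rho0_spec (R : realType) :
  rho0 R = 0 \/ [/\ 0 < rho0 R, rho0 R < 1 & cycle_series (rho0 R) = 1].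
Proof.
rewrite /rho0; set P := [set r : R | _]; case: (xgetP 0 P) => [r _ [/andP[r0 r1] r_root]|_]; last by left.
right.
have r_neq0 : r != 0.
  apply/eqP => r_eq0; move: r_root; rewrite r_eq0 mul0r subr0 => /eqP.
  by rewrite eq_sym oner_eq0.
have r_neq1 : r != 1.
  apply/eqP => r_eq1; move: r_root; rewrite r_eq1 subrr expr0n invr0 mulr0 sub0r => /eqP.
  by rewrite -subr_eq0 -opprD oppr_eq0 -(natrD R 1 1) pnatr_eq0.
by rewrite !lt_neqAle r0 r1 eq_sym r_neq0 r_neq1.
Qed.

Section Rho.
Variables (R : realType) (d : nat) (V : Zd d -> \bar R).
Hypothesis V_ge0 : forall x, (0 <= V x)%E.

Lemma rho_ge0 alpha : (0 <= rho V alpha)%E.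
Proof. by apply: esum_ge0 => x _; exact: expeR_ge0. Qed.

Lemma rho_lt alpha beta y v : 0 < alpha < beta -> rho V alpha \is a fin_num ->
  y != 0 -> V y = v%:E -> 0 < v -> (rho V beta < rho V alpha)%E.
Proof.
move=> /andP[alpha_gt0 lt_ab] rho_fin y0 Vy v0; have beta_gt0 := lt_trans alpha_gt0 lt_ab.
have rhoE a : 0 < a -> rho V a = ((boltzmann V a y)%:E +
    \esum_(x in [set x : Zd d | x != 0%R] `&` ~` [set y]) expeR (- (a%:E * V x)))%E.
  move=> a_gt0; rewrite /rho (esumID [set y]); last by move=> x _; exact: expeR_ge0.
  rewrite setIidr; last by move=> _ ->.
  rewrite esum_set1; last exact: expeR_ge0.
  by rewrite (boltzmannE V_ge0).
move: rho_fin; rewrite !rhoE // fin_numD => /andP[_ rest_fin].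
apply: le_lt_trans (leeD2l _ (le_esum (b := fun x => expeR (- (alpha%:E * V x))) _)) _.
  move=> x _; rewrite !(boltzmannE V_ge0) // lee_fin.
  by apply: boltzmann_le => //; exact: ltW.
by rewrite lteD2rE // lte_fin (boltzmann_lt _ Vy) // alpha_gt0.
Qed.

Lemma exists_pos_fin_potential alpha : 0 < alpha ->
  (0 < rho V alpha)%E -> (rho V alpha < 1)%E ->
  exists y v, [/\ y != 0, V y = v%:E & 0 < v].
Proof.
move=> alpha_gt0 rho_gt0 rho_lt1.
have [y [y0 Vy_fin]] : exists y, y != 0 /\ V y != +oo%E.
  apply: contrapT => no_fin; move: rho_gt0; rewrite /rho esum1 ?ltxx // => x /= x0.
  have -> : V x = +oo%E by apply: contrapT => Vx; apply: no_fin; exists x; split => //; exact/eqP.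
  by rewrite mulry gtr0_sg // mul1e.
have [v Vy] : exists v, V y = v%:E.
  by move: (V_ge0 y) Vy_fin; case: (V y) => [v||] // _ _; exists v.
exists y, v; split => //; rewrite lt_neqAle -lee_fin -Vy V_ge0 andbT.
apply: contraTneq rho_lt1 => v0; rewrite -leNgt.
have := sum_boltzmann_le_rho V_ge0 alpha_gt0 (l := [:: y]) erefl.
rewrite big_seq1 (boltzmann_fin _ Vy) -v0 mulr0 oppr0 expR0; apply.
by move=> x; rewrite inE => /eqP ->.
Qed.

End Rho.

Section AlphaStar.
Variables (R : realType) (d : nat) (V : Zd d -> \bar R).
Hypothesis V_ge0 : forall x, (0 <= V x)%E.

Lemma beta_lt1 alpha : 0 < alpha -> (rho V alpha < (rho0 R)%:E)%E -> (beta V alpha < 1)%E.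
Proof.
move=> alpha_gt0 rho_lt; have rho_ge0 := rho_ge0 V alpha.
case: (rho0_spec R) => [rho0_eq0 | [_ rho0_lt1 rho0_root]].
  by move: rho_lt; rewrite rho0_eq0 ltNge rho_ge0.
have rho_fin : rho V alpha \is a fin_num.
  by rewrite ge0_fin_numE // (lt_trans rho_lt) ?ltry.
have r_lt : fine (rho V alpha) < rho0 R by rewrite -lte_fin fineK.
apply: le_lt_trans (beta_le_cycle_series V_ge0 alpha_gt0 (r := fine (rho V alpha)) _ _) _.
- by rewrite fineK.
- exact: lt_trans r_lt rho0_lt1.
- by rewrite lte_fin -rho0_root cycle_series_lt // fine_ge0.
Qed.

Lemma alpha_star_le alpha : (beta V alpha < 1)%E -> (alpha_star V <= alpha%:E)%E.
Proof. by move=> beta_lt; apply: ereal_inf_lbound; exists alpha. Qed.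

Lemma alpha_star_le_rho0 alpha : 0 < alpha -> (rho V alpha <= (rho0 R)%:E)%E ->
  (alpha_star V <= alpha%:E)%E.
Proof.
move=> alpha_gt0; rewrite le_eqVlt => /orP[/eqP rho_eq | rho_lt]; last first.
  exact/alpha_star_le/beta_lt1.
case: (rho0_spec R) => [rho0_eq0 | [rho0_gt0 rho0_lt1 _]].
  apply: alpha_star_le; apply: le_lt_trans (beta_le_cycle_series V_ge0 alpha_gt0 (r := 0) _ _) _.
  - by rewrite rho_eq rho0_eq0.
  - exact: ltr01.
  - by rewrite /cycle_series mul0r subr0 lte_fin ltr01.
have [y [v [y0 Vy v_gt0]]] : exists y v, [/\ y != 0, V y = v%:E & 0 < v].
  by apply: (exists_pos_fin_potential V_ge0 alpha_gt0); rewrite rho_eq lte_fin.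
apply/lee_addgt0Pr => e e_gt0; rewrite -EFinD; apply/alpha_star_le/beta_lt1.
  exact: addr_gt0.
rewrite -rho_eq; apply: (rho_lt V_ge0 _ _ y0 Vy v_gt0).
  by rewrite alpha_gt0 ltrDl.
by rewrite rho_eq.
Qed.

End AlphaStar.

Theorem corollary5p2 (R : realType) (d : nat) (V : Zd d -> \bar R) :
  strictly_convex_pot V ->
  V 0 = 0%E ->
  (forall x, (0 <= V x)%E) ->
  (forall alpha : R, 0 < alpha -> (rho V alpha < (rho0 R)%:E)%E ->
     (beta V alpha < 1)%E) /\
  (alpha_star V <=
     ereal_inf [set a%:E | a in [set a : R | (0 < a)%R /\ (rho V a <= (rho0 R)%:E)%E]])%E.
Proof.
move=> _ _ V_ge0; split; first exact: beta_lt1.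
by apply/ereal_infP => _ [alpha [alpha_gt0 rho_le] <-]; exact: alpha_star_le_rho0.
Qed.
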